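(* Let $\ell\geq 4$, let $a_1,\dots,a_\ell\in\mathbb{R}\setminus\{0\}$, and let $B\subseteq\mathbb{R}$ with $|B|=4$. Then \[ \left|\left\{ I\subseteq[\ell] : \sum_{i\in I}a_i\in B\right\}\right| \leq \frac{15}{16}2^{\ell}.\] *)

From mathcomp Require Import all_boot all_order all_algebra.
From mathcomp Require Import reals.
Set Implicit Arguments. Unset Strict Implicit. Unset Printing Implicit Defensive.

From mathcomp Require Import all_boot all_order all_algebra.
From mathcomp Require Import reals lra.
Set Implicit Arguments. Unset Strict Implicit. Unset Printing Implicit Defensive.

(* Split [l] into S = {0, 1, 2, 3} and its complement.  For a fixed part J of I
   outside S, the sixteen sets K :|: J with K \subset S have sums
   sum_J a + sum_K a.  The subset sums of n nonzero reals take at least n + 1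
   distinct values, so at least one of these five or more values avoids the
   four-element set B: every such fibre contains at most 15 sets I with
   sum_I a in B, and there are 2 ^ (l - 4) fibres. *)

Import Order.TTheory GRing.Theory Num.Theory.
Local Open Scope ring_scope.

Section SubsetSums.
Variables (T : finType) (R : realDomainType) (a : T -> R).

Definition subset_sums (S : {set T}) : seq R :=
  undup [seq \sum_(i in K) a i | K : {set T} <- enum (powerset S)].

Lemma subset_sumsP (S : {set T}) x :
  reflect (exists2 K : {set T}, K \subset S & x = \sum_(i in K) a i)
          (x \in subset_sums S).
Proof.
rewrite mem_undup; apply: (iffP mapP) => -[K KS ->]; exists K => //.
  by rewrite mem_enum powersetE in KS.
by rewrite mem_enum powersetE.
Qed.

Lemma exists_new_subset_sum x (S : {set T}) : x \notin S -> a x != 0 ->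
  exists2 y, y \in subset_sums (x |: S) & y \notin subset_sums S.
Proof.
(* Take K maximising sg (a x) * sum_K a: the sum over x |: K lies beyond every
   subset sum of S in the direction sg (a x). *)
move=> xS ax0; pose F (K : {set T}) := Num.sg (a x) * \sum_(i in K) a i.
have set0S : set0 \in powerset S by rewrite powersetE sub0set.
have [K KS Kmax] := arg_maxP F set0S.
have {}KS : K \subset S by rewrite -powersetE.
exists (\sum_(i in x |: K) a i).
  by apply/subset_sumsP; exists (x |: K); rewrite // setUS.
apply/subset_sumsP => -[K' K'S].
have xK : x \notin K by apply: contra xS; apply: subsetP.
rewrite big_setU1 //= => sum_eq.
have := Kmax K' (_ : K' \in powerset S); rewrite powersetE => /(_ K'S).
by rewrite /F -sum_eq mulrDr -normrEsg /= leNgt ltrDr normr_gt0 ax0.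
Qed.

Lemma size_subset_sums (S : {set T}) : {in S, forall i, a i != 0} ->
  (#|S| < size (subset_sums S))%N.
Proof.
elim: {S}#|S| {-2}S (erefl #|S|) => [|n IH] S cardS nz.
  have : 0 \in subset_sums S.
    by apply/subset_sumsP; exists set0; rewrite ?sub0set ?big_set0.
  by rewrite cardS; case: (subset_sums S).
have [x xS] : exists x, x \in S by apply/set0Pn; rewrite -card_gt0 cardS.
pose S' := S :\ x.
have cardS' : #|S'| = n by move: cardS; rewrite (cardsD1 x) xS => -[].
have S'S : S' \subset S by apply: subD1set.
have /IH /(_ (sub_in1 (subsetP S'S) nz)) := cardS'.
have [y yS yS'] : exists2 y, y \in subset_sums S & y \notin subset_sums S'.
  by rewrite -{1}(setD1K xS); apply: exists_new_subset_sum; rewrite ?setD11 ?nz.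
have grow : {subset y :: subset_sums S' <= subset_sums S}.
  move=> z /predU1P[-> // | /subset_sumsP[K KS ->]].
  by apply/subset_sumsP; exists K => //; apply: subset_trans KS S'S.
have /uniq_leq_size/(_ grow) : uniq (y :: subset_sums S') by rewrite /= yS' undup_uniq.
by rewrite cardS cardS' => size_grow size_S'; apply: leq_trans size_grow.
Qed.

Lemma exists_subset_sum_notin (S : {set T}) (c : R) (B : seq R) :
  {in S, forall i, a i != 0} -> (size B <= #|S|)%N ->
  exists2 K : {set T}, K \subset S & c + \sum_(i in K) a i \notin B.
Proof.
move=> nz sizeB.
have [/existsP[K /andP[KS notinB]] | /existsPn allin] :=
  boolP [exists K : {set T}, (K \subset S) && (c + \sum_(i in K) a i \notin B)].
  by exists K.
have shifted_in : {subset map (+%R c) (subset_sums S) <= B}.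
  move=> _ /mapP[_ /subset_sumsP[K KS ->] ->].
  by have := allin K; rewrite KS negbK.
have /uniq_leq_size/(_ shifted_in) : uniq (map (+%R c) (subset_sums S)).
  by rewrite (map_inj_uniq (addrI c)) undup_uniq.
by rewrite size_map => /(leq_trans (size_subset_sums nz)); rewrite ltnNge sizeB.
Qed.

End SubsetSums.

Section Fibres.
Variables (T : finType) (S : {set T}).

Lemma setUD_outside (K J : {set T}) :
  K \subset S -> J \subset ~: S -> (K :|: J) :\: S = J.
Proof.
move=> KS JSc; have /eqP KS0 : K :\: S == set0 by rewrite setD_eq0.
by rewrite setDUl KS0 set0U; apply/setDidPl; rewrite disjoints_subset.
Qed.

Lemma setUI_outside (K J : {set T}) :
  K \subset S -> J \subset ~: S -> (K :|: J) :&: S = K.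
Proof.
move=> KS JSc; rewrite setIUl (setIidPl KS).
by rewrite disjoint_setI0 ?setU0 // disjoints_subset.
Qed.

Lemma card_setD_fibre (J : {set T}) : J \subset ~: S ->
  #|[set I : {set T} | I :\: S == J]| = (2 ^ #|S|)%N.
Proof.
move=> JSc.
have -> : [set I : {set T} | I :\: S == J]
         = (fun K : {set T} => K :|: J) @: powerset S.
  apply/setP => I; rewrite inE; apply/eqP/imsetP => [<- | [K KS ->]].
    exists (I :&: S); first by rewrite powersetE subsetIr.
    by rewrite setDE -setIUr setUCr setIT.
  by rewrite setUD_outside // -powersetE.
rewrite card_in_imset ?card_powerset // => K K'; rewrite !powersetE => KS K'S E.
by rewrite -(setUI_outside KS JSc) E setUI_outside.
Qed.

Lemma card_sets_missing_every_fibre (P : pred {set T}) :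
  (forall J : {set T}, J \subset ~: S ->
     exists2 K : {set T}, K \subset S & ~~ P (K :|: J)) ->
  (#|[set I | P I]| <= (2 ^ #|S|).-1 * 2 ^ #|~: S|)%N.
Proof.
move=> miss; rewrite -sum1_card.
rewrite (partition_big (fun I => I :\: S) (mem (powerset (~: S)))) /=; last first.
  by move=> I _; rewrite powersetE setDE subsetIr.
rewrite -(card_powerset (~: S)) mulnC -sum_nat_const; apply: leq_sum => J.
rewrite powersetE => JSc; have [K KS notPK] := miss J JSc.
rewrite sum1dep_card -(card_setD_fibre JSc).
rewrite (cardsD1 (K :|: J) [set I | I :\: S == J]).
rewrite inE setUD_outside // eqxx /=.
apply/subset_leq_card/subsetP => I /=; rewrite !inE => /andP[PI ->].
by rewrite andbT; apply: contraNneq notPK => <-.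
Qed.

End Fibres.

Theorem lemma4p1 (R : realType) (l : nat) (a : 'I_l -> R) (B : seq R) :
  (4 <= l)%N ->
  (forall i, a i != 0) ->
  uniq B -> size B = 4%N ->
  (#|[set I : {set 'I_l} | (\sum_(i in I) a i) \in B]|%:R : R)
    <= (15 / 16) * 2 ^+ l.
Proof.
move=> l4 nz _ sizeB.
pose S := [set widen_ord l4 j | j : 'I_4].
have cardS : #|S| = 4%N.
  by rewrite card_imset ?card_ord // => i j /(congr1 val) /= /val_inj.
have cardSc : #|~: S| = (l - 4)%N by rewrite cardsCs setCK card_ord cardS.
have sizeBS : (size B <= #|S|)%N by rewrite sizeB cardS.
have miss (J : {set 'I_l}) : J \subset ~: S ->
    exists2 K : {set 'I_l}, K \subset S & \sum_(i in K :|: J) a i \notin B.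
  move=> JSc.
  have [K KS notinB] := exists_subset_sum_notin (\sum_(i in J) a i) (in1W nz) sizeBS.
  exists K => //.
  have KJ : [disjoint K & J].
    by apply: disjointWl KS _; rewrite disjoint_sym disjoints_subset.
  rewrite (eq_bigl [predU K & J]) => [|i]; last by rewrite inE.
  by rewrite bigU //= addrC.
have := card_sets_missing_every_fibre (P := fun I => \sum_(i in I) a i \in B) miss.
rewrite cardS cardSc -(ler_nat R) => /le_trans; apply.
rewrite -{2}(subnK l4) exprD natrM natrX (_ : (2 ^ 4).-1 = 15)%N //.
lra.
Qed.
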